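(* Fix an integer $k\ge 0$ and a link $i$ of a kinematic tree. Suppose all quantities below depend differentiably on a scalar parameter $\varepsilon$, and let $\delta$ denote $\frac{d}{d\varepsilon}$ at $\varepsilon=0$. Let $\eta_{L_i}\in\mathbb{R}^{6(k+1)}$ be the tangent vector of the world-frame comprehensive force transformation of link $i$, i.e. the vector with $$\delta\big({}^{w}\mathfrak{A}^{*}_{L_i}\big)={}^{w}\mathfrak{A}^{*}_{L_i}\,[\eta_{L_i}\times^{*}_{6\cdot k}].$$ Define the world-frame comprehensive momenta ${}^{w}\mathfrak{h}_{L_j}:={}^{w}\mathfrak{A}^{*}_{L_j}\mathfrak{h}_{L_j}$ and ${}^{w}\mathfrak{h}_{J_j}:={}^{w}\mathfrak{A}^{*}_{L_j}\mathfrak{h}_{J_j}$ for every link $j$, and assume they satisfy, for every link $j$, the propagation rule ${}^{w}\mathfrak{h}_{J_j}={}^{w}\mathfrak{h}_{L_j}+\sum_{c\in\mu(j)}{}^{w}\mathfrak{h}_{J_c}$, where $\mu(j)$ is the set of children of $j$. Then: (1) (world transformation) $\delta\,{}^{w}\mathfrak{h}_{L_i}={}^{w}\mathfrak{A}^{*}_{L_i}\,\delta\mathfrak{h}_{L_i}+{}^{w}\mathfrak{A}^{*}_{L_i}\,[\mathfrak{h}_{L_i}\,\hat{\times}^{*}_{6\cdot k}]\,\eta_{L_i}$; (2) (momentum propagation) $\delta\,{}^{w}\mathfrak{h}_{J_i}=\sum_{j\in\bar\mu(i)} E\,\delta\,{}^{w}\mathfrak{h}_{L_j}$, where $\bar\mu(i)$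 is the set consisting of $i$ and all its descendants and $E$ is the identity matrix; (3) (local recovery) $\delta\mathfrak{h}_{J_i}=\big({}^{w}\mathfrak{A}^{*}_{L_i}\big)^{-1}\delta\,{}^{w}\mathfrak{h}_{J_i}-\Big[\Big(\big({}^{w}\mathfrak{A}^{*}_{L_i}\big)^{-1}\,{}^{w}\mathfrak{h}_{J_i}\Big)\hat{\times}^{*}_{6\cdot k}\Big]\eta_{L_i}$.
   Context: Notation. For $u\in\mathbb{R}^3$, $[u\times]$ is the skew-symmetric cross-product matrix. For $u=(v_0,v_1)\in\mathbb{R}^6$ ($v_0,v_1\in\mathbb{R}^3$), $[u\times_6]=\begin{bmatrix}[v_0\times]&0\\ [v_1\times]&[v_0\times]\end{bmatrix}$ and the force-space operator is $[u\times^{*}_6]:=-[u\times_6]^{T}$. For a stacked vector $u=(u_0,\dots,u_k)\in\mathbb{R}^{6(k+1)}$ with $u_m\in\mathbb{R}^6$, $[u\times^{*}_{6\cdot k}]$ is the block lower-triangular Toeplitz matrix whose $(l,m)$ block ($l\ge m$) is $[u_{l-m}\times^{*}_6]$ and whose blocks above the diagonal are zero. The operator $[x\,\hat{\times}^{*}_{6\cdot k}]$ is the matrix defined by $[x\,\hat{\times}^{*}_{6\cdot k}]\,y=[y\times^{*}_{6\cdot k}]\,x$ for all $y$. The comprehensive representation of a time-dependent quantity $a(t)$ up to order $k$ is the stacked vector $(a, \tfrac{1}{1!}\dot a,\dots,\tfrac{1}{k!}a^{(k)})$. Setting: a multi-link system with tree structure; each link $j$ has a comprehensive link momentum $\mathfrak{h}_{L_j}\in\mathbb{R}^{6(k+1)}$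 (stacked spatial momentum and its scaled time derivatives, in the local frame of link $j$) and a comprehensive joint momentum $\mathfrak{h}_{J_j}\in\mathbb{R}^{6(k+1)}$ (momentum transmitted through the joint connecting link $j$ to its parent, in the local frame of link $j$). ${}^{w}\mathfrak{A}^{*}_{L_j}$ is the comprehensive force transformation of link $j$ relative to the world: the block lower-triangular Toeplitz matrix whose $l$-th subdiagonal block is $\frac{1}{l!}\frac{d^l}{dt^l}A^{*}_j(t)$, where $A^{*}_j=\begin{bmatrix}R_j&[p_j\times]R_j\\0&R_j\end{bmatrix}$ with $(R_j,p_j)$ the world orientation and position of link $j$; it is invertible. *)

From HB Require Import structures.
From mathcomp Require Import all_boot all_order all_algebra.
From mathcomp Require Import all_classical all_reals all_analysis.
Set Implicit Arguments. Unset Strict Implicit. Unset Printing Implicit Defensive.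
Import Order.TTheory GRing.Theory Num.Theory.
Local Open Scope ring_scope.

Section Defs.
Variable R : realType.

Definition skew3 (v : 'cV[R]_3) : 'M[R]_3 :=
  let c (l : nat) := v (inord l) 0 in
  \matrix_(a < 3, b < 3)
    match val a, val b with
    | 0, 1 => - c 2%N | 0, 2 => c 1%N
    | 1, 0 => c 2%N   | 1, 2 => - c 0%N
    | 2, 0 => - c 1%N | 2, 1 => c 0%N
    | _, _ => 0 end.

Definition cross6 (u : 'cV[R]_6) : 'M[R]_6 :=
  let v0 := @usubmx R 3 3 1 u in
  let v1 := @dsubmx R 3 3 1 u in
  @block_mx R 3 3 3 3 (skew3 v0) 0 (skew3 v1) (skew3 v0).

Definition cross6star (u : 'cV[R]_6) : 'M[R]_6 := - (cross6 u)^T.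

Definition Astar (Rm : 'M[R]_3) (p : 'cV[R]_3) : 'M[R]_6 :=
  @block_mx R 3 3 3 3 Rm (skew3 p *m Rm) 0 Rm.

Definition is_rot (Rm : 'M[R]_3) : Prop := Rm^T *m Rm = 1%:M /\ \det Rm = 1.

Variable k : nat.
Local Notation N := (6 * k.+1)%N.

Definition nth_cv (u : 'cV[R]_N) (i : nat) : R :=
  if @insub nat (fun x => x < N)%N 'I_N i is Some j then u j 0 else 0.

Definition blk (u : 'cV[R]_N) (m : nat) : 'cV[R]_6 :=
  \col_(r < 6) nth_cv u (6 * m + r).

(* block lower-triangular Toeplitz matrix with (l,m) block B (l - m), l >= m *)
Definition toep (B : nat -> 'M[R]_6) : 'M[R]_N :=
  \matrix_(a < N, b < N)
    if (b %/ 6 <= a %/ 6)%N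
    then B (a %/ 6 - b %/ 6)%N (inord (a %% 6)) (inord (b %% 6))
    else 0.

Definition crossK (u : 'cV[R]_N) : 'M[R]_N := toep (fun l => cross6star (blk u l)).

(* [x ^x*_{6.k}] : the matrix with  [x ^x*] y = [y x*] x  for all y
   (its b-th column is [e_b x*] x) *)
Definition hatcross (x : 'cV[R]_N) : 'M[R]_N :=
  \matrix_(a < N, b < N) (crossK (delta_mx b 0) *m x) a 0.

Definition compA (Af : R -> 'M[R]_6) (t : R) : 'M[R]_N :=
  toep (fun l => (l`!%:R)^-1 *: derive1n l Af t).

Definition worldA (Rt : R -> 'M[R]_3) (pt : R -> 'cV[R]_3) (t : R) : 'M[R]_N :=
  compA (fun s => Astar (Rt s) (pt s)) t.

End Defs.

(* kinematic tree on links 'I_n given by a parent map; tree-ness (no cycles)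
   is expressed by a strictly decreasing depth along parent edges *)
Definition is_tree (n : nat) (parent : 'I_n -> option 'I_n) : Prop :=
  exists depth : 'I_n -> nat,
    forall j p, parent j = Some p -> (depth p < depth j)%N.

(* j belongs to mu_bar(i): j is i or a descendant of i *)
Definition descendant (n : nat) (parent : 'I_n -> option 'I_n) (i j : 'I_n) : bool :=
  connect (fun a b => parent b == Some a) i j.

(* Write [A j e] for the world force transformation of link [j] and [u ↦ [u ×*]] for
   [crossK].  Since [[u ×*] x] is linear in [u], it equals [[x ^×*] u]; combined with the
   product rule for [A i e *m h e] and [δA_i = A_i [η ×*]] this gives (1), and, after
   cancelling [A_i^-1 A_i], (3).  For (2), unrolling the propagation rule down the tree
   shows that the world joint momentum of [i] is the sum of the world link momenta over
   the subtree rooted at [i] (the subtrees of distinct children are disjoint, because a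
   node has a single parent); differentiating this finite sum term by term gives (2). *)

From HB Require Import structures.
From mathcomp Require Import all_boot all_order all_algebra.
From mathcomp Require Import all_classical all_reals all_analysis.
From mathcomp Require Import ring zify.
Import Order.TTheory GRing.Theory Num.Theory numFieldNormedType.Exports.
Local Open Scope ring_scope.
Set Implicit Arguments.
Unset Strict Implicit.

Section MatrixProductRule.
Variable R : realFieldType.
Variables (m n p : nat) (M : R -> 'M[R]_(m, n)) (h : R -> 'M[R]_(n, p)) (t : R).
Hypotheses (dM : derivable M t 1) (dh : derivable h t 1).

Let entry_product_rule i j :
  derivable (fun x => (M x *m h x) i j) t 1 /\
  'D_1 (fun x => (M x *m h x) i j) t =
    \sum_l ('D_1 (fun x => M x i l) t * h t l j + M t i l * 'D_1 (fun x => h x l j) t).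
Proof.
have dMil l : derivable (fun x => M x i l) t 1 by exact: (derivable_mxP M t 1).1.
have dhlj l : derivable (fun x => h x l j) t 1 by exact: (derivable_mxP h t 1).1.
have -> : (fun x => (M x *m h x) i j) =
          \sum_(l < n) ((fun x => M x i l) * (fun x => h x l j)).
  by rewrite fct_sumE; apply/funext => x; rewrite mxE.
have dprod l : derivable ((fun x => M x i l) * (fun x => h x l j)) t 1.
  exact: derivableM.
split; first exact: derivable_sum.
rewrite derive_sum //; apply: eq_bigr => l _.
by rewrite deriveM //= addrC; congr (_ + _); exact: mulrC.
Qed.

Lemma derivable_mulmx : derivable (fun e => M e *m h e) t 1.
Proof. by apply/derivable_mxP => i j; case: (entry_product_rule i j). Qed.

Lemma derive_mulmx :
  'D_1 (fun e => M e *m h e) t = 'D_1 M t *m h t + M t *m 'D_1 h t.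
Proof.
rewrite (derive_mx derivable_mulmx) (derive_mx dM) (derive_mx dh).
apply/matrixP => i j; rewrite !mxE (entry_product_rule i j).2 big_split /=.
by congr (_ + _); apply: eq_bigr => l _; rewrite !mxE.
Qed.

End MatrixProductRule.

Lemma derive_sum_cond (R : numFieldType) (V : normedModType R) (n : nat)
    (P : pred 'I_n) (F : 'I_n -> R -> V) (t : R) :
  (forall j, P j -> derivable (F j) t 1) ->
  'D_1 (fun e => \sum_(j | P j) F j e) t = \sum_(j | P j) 'D_1 (F j) t.
Proof.
move=> dF; pose G j e := if P j then F j e else 0.
have dG j : derivable (G j) t 1.
  by rewrite /G; case Pj: (P j); [exact: dF | exact: derivable_cst].
have -> : (fun e => \sum_(j | P j) F j e) = \sum_(j < n) G j.
  by rewrite fct_sumE; apply/funext => e; rewrite big_mkcond.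
rewrite derive_sum // [RHS]big_mkcond; apply: eq_bigr => j _.
by rewrite /G; case: (P j) => //; rewrite derive_cst.
Qed.

Lemma mulmx_linear_delta (R : comNzRingType) m n p
    (f : {linear 'cV[R]_n -> 'M[R]_(m, p)}) (x : 'cV[R]_p) (u : 'cV[R]_n) :
  f u *m x = (\matrix_(a, b) (f (delta_mx b 0) *m x) a 0) *m u.
Proof.
rewrite {1}(matrix_sum_delta u) linear_sum mulmx_suml.
apply/matrixP => a c; rewrite ord1 !mxE summxE; apply: eq_bigr => b _.
by rewrite big_ord1 linearZ -scalemxAl !mxE mulrC.
Qed.

Section CrossLinear.
Variable R : realType.

Lemma skew3_is_linear : linear (@skew3 R).
Proof.
move=> a u v; apply/matrixP => p q; rewrite !mxE.
by case: p => [[|[|[|p]]] ?]; case: q => [[|[|[|q]]] ?] /=; rewrite ?mxE; ring.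
Qed.

Lemma cross6_is_linear : linear (@cross6 R).
Proof.
move=> a u v; rewrite /cross6 !linearP /= !skew3_is_linear.
rewrite (@scale_block_mx _ 3 3 3 3) (@add_block_mx _ 3 3 3 3).
by rewrite scaler0 addr0.
Qed.

Lemma cross6star_is_linear : linear (@cross6star R).
Proof. by move=> a u v; rewrite /cross6star cross6_is_linear linearP opprD scalerN. Qed.

Variable k : nat.
Local Notation N := (6 * k.+1)%N.

Lemma nth_cv_is_linear i : linear (fun u : 'cV[R]_N => nth_cv u i : R^o).
Proof.
move=> a u v; rewrite /nth_cv; case: insubP => [j _ _|_]; rewrite ?mxE //.
by rewrite scaler0 addr0.
Qed.

Lemma blk_is_linear m : linear (fun u : 'cV[R]_N => blk u m).
Proof. by move=> a u v; apply/matrixP => p q; rewrite !mxE nth_cv_is_linear. Qed.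

Lemma crossK_is_linear : linear (@crossK R k).
Proof.
move=> a u v; apply/matrixP => p q.
rewrite [LHS]mxE blk_is_linear cross6star_is_linear !mxE.
by case: ifP; rewrite ?mxE // mulr0 addr0.
Qed.

HB.instance Definition _ := GRing.isLinear.Build R 'cV[R]_N 'M[R]_N _ (@crossK R k)
  crossK_is_linear.

Lemma crossK_mulmx (u x : 'cV[R]_N) : crossK u *m x = hatcross x *m u.
Proof. exact: mulmx_linear_delta. Qed.

End CrossLinear.

Section Tree.
Variables (n : nat) (parent : 'I_n -> option 'I_n).
Local Notation desc := (descendant parent).

Lemma descendant_last j d :
  desc j d -> d = j \/ exists2 p, parent d = Some p & desc j p.
Proof.
move/connectP => [s]; case/lastP: s => [|s z] /=; first by left.
rewrite rcons_path last_rcons => /andP [js /eqP pz] ->; right.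
by exists (last j s) => //; apply/connectP; exists s.
Qed.

Lemma descendant_comparable a b d : desc a d -> desc b d -> desc a b || desc b a.
Proof.
move/connectP => [s]; elim/last_ind: s d => [|s z IH] d /=.
  by move=> _ -> ->; rewrite orbT.
rewrite rcons_path last_rcons => /andP [a_s /eqP pz] -> bz.
case: (descendant_last bz) => [<-|[p pp bp]].
  apply/orP; left; apply/connectP; exists (rcons s z); last by rewrite last_rcons.
  by rewrite rcons_path a_s /= pz.
by move: pp; rewrite pz => -[ep]; exact: IH p a_s (esym ep) bp.
Qed.

Variable depth : 'I_n -> nat.
Hypothesis depth_parent : forall j p, parent j = Some p -> (depth p < depth j)%N.

Lemma descendant_depth j d : desc j d -> (depth j <= depth d)%N.
Proof.
move/connectP => [s pth ->] {d}.
elim: s j pth => [|c s IH] j //= /andP [/eqP pc /IH]; apply: leq_trans.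
exact/ltnW/depth_parent.
Qed.

Lemma child_not_ancestor c j : parent c = Some j -> ~~ desc c j.
Proof. by move=> pc; apply/negP => /descendant_depth; rewrite leqNgt depth_parent. Qed.

Lemma sibling_descendant_eq j c1 c2 d : parent c1 = Some j -> parent c2 = Some j ->
  desc c1 d -> desc c2 d -> c1 = c2.
Proof.
have ancestor_eq x y : parent x = Some j -> parent y = Some j -> desc x y -> x = y.
  move=> px py /descendant_last [//|[p]]; rewrite py => -[<-] xj.
  by rewrite (negbTE (child_not_ancestor px)) in xj.
move=> p1 p2 d1 d2; case/orP: (descendant_comparable d1 d2) => [|/ancestor_eq-> //].
exact: ancestor_eq.
Qed.

Lemma proper_descendantE j d :
  (d != j) && desc j d = [exists c, (parent c == Some j) && desc c d].
Proof.
apply/idP/existsP => [/andP [dj /connectP [[|c s] /= pth d_last]]|[c /andP [/eqP pc cd]]].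
- by rewrite d_last eqxx in dj.
- by case/andP: pth => pc cs; exists c; rewrite pc; apply/connectP; exists s.
have jd : desc j d by apply: connect_trans cd; apply: connect1; rewrite /= pc.
rewrite jd andbT; apply: contraNneq (child_not_ancestor pc) => <-//.
Qed.

Lemma big_descendant (V : nmodType) (f : 'I_n -> V) j :
  \sum_(d | desc j d) f d = f j + \sum_(c | parent c == Some j) \sum_(d | desc c d) f d.
Proof.
rewrite (bigD1 j (connect0 _ j)) /=; congr (_ + _).
rewrite (exchange_big_dep (fun d => [exists c, (parent c == Some j) && desc c d])) /=;
  last by move=> c d pc cd; apply/existsP; exists c; rewrite pc.
apply: eq_big => [d|d /andP [jd dj]]; first by rewrite andbC proper_descendantE.
have /existsP [c0 /andP [/eqP pc0 c0d]] : [exists c, (parent c == Some j) && desc c d].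
  by rewrite -proper_descendantE dj.
rewrite (big_pred1 c0) // => c /=; apply/andP/eqP => [[/eqP pc cd]|->].
  exact: sibling_descendant_eq pc pc0 cd c0d.
by rewrite pc0.
Qed.

Lemma subtree_sum (V : nmodType) (f g : 'I_n -> V) :
  (forall j, g j = f j + \sum_(c | parent c == Some j) g c) ->
  forall j, g j = \sum_(d | desc j d) f d.
Proof.
move=> gE j; have [m] := ubnP (\max_x depth x - depth j)%N.
elim: m j => // m IH j lt_j; rewrite gE big_descendant; congr (_ + _).
apply: eq_bigr => c /eqP /depth_parent lt_jc; apply: IH.
have := leq_bigmax (F := depth) c; lia.
Qed.

End Tree.

Theorem lemma4 (R : realType) (k n : nat) (parent : 'I_n -> option 'I_n)
  (Rot : 'I_n -> R -> R -> 'M[R]_3) (pos : 'I_n -> R -> R -> 'cV[R]_3)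
  (t0 : R) (hL hJ : 'I_n -> R -> 'cV[R]_(6 * k.+1))
  (i : 'I_n) (eta : 'cV[R]_(6 * k.+1)) :
  is_tree parent ->
  let A (j : 'I_n) (e : R) := worldA k (Rot j e) (pos j e) t0 in
  (forall j e t, is_rot (Rot j e t)) ->
  (forall j e, A j e \in unitmx) ->
  (forall j e, derivable (A j) e 1) ->
  (forall j e, derivable (hL j) e 1) ->
  (forall j e, derivable (hJ j) e 1) ->
  derive1 (A i) 0 = A i 0 *m crossK eta ->
  (forall j e, A j e *m hJ j e
               = A j e *m hL j e + \sum_(c | parent c == Some j) A c e *m hJ c e) ->
  [/\ derive1 (fun e => A i e *m hL i e) 0
        = A i 0 *m derive1 (hL i) 0 + A i 0 *m hatcross (hL i 0) *m eta,
      derive1 (fun e => A i e *m hJ i e) 0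
        = \sum_(j | descendant parent i j)
            1%:M *m derive1 (fun e => A j e *m hL j e) 0
    & derive1 (hJ i) 0
        = invmx (A i 0) *m derive1 (fun e => A i e *m hJ i e) 0
          - hatcross (invmx (A i 0) *m (A i 0 *m hJ i 0)) *m eta].
Proof.
move=> [depth depth_parent] A _ A_unit dA dhL dhJ dA_eta propagation.
have hJ_world e j :
    A j e *m hJ j e = \sum_(d | descendant parent j d) A d e *m hL d e.
  exact: (subtree_sum depth_parent (g := fun j => A j e *m hJ j e) (propagation ^~ e)).
split.
- rewrite derive1E (derive_mulmx (dA i 0) (dhL i 0)) -!derive1E dA_eta.
  by rewrite -!mulmxA crossK_mulmx addrC.
- rewrite derive1E (funext (hJ_world ^~ i)) derive_sum_cond => [|j _].
    by apply: eq_bigr => j _; rewrite mul1mx derive1E.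
  exact: derivable_mulmx.
- rewrite [in RHS]derive1E (derive_mulmx (dA i 0) (dhJ i 0)) -!derive1E dA_eta.
  rewrite mulmxDr !mulmxA mulVmx // !mul1mx crossK_mulmx.
  by rewrite addrAC subrr add0r.
Qed.
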